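(* Let $G\subset \mathrm{SL}_3(\mathbb{C})$ be a finite subgroup, and let $\gamma$, $\gamma^*$, $\gamma_0,\dots,\gamma_l$, $B$, $B^*$, $v_m$, $P_G(t)$, $M(t)$, $M_0(t)$ be as in the context. Then: (a) for all integers $m\ge -1$ one has $v_{m+2}=Bv_{m+1}-B^*v_m+v_{m-1}$, where $v_{-1}=v_{-2}:=0$; (b) $P_G(t)$ satisfies the linear equation $\big((1-t^3)I-tB+t^2B^*\big)P_G(t)=v_0$ in $\mathbb{Z}[[t]]^{l+1}$, where $v_0=(1,0,\dots,0)^t$; (c) $\det M(t)$ is an invertible element of $\mathbb{Z}[[t]]$ and $$P_G(t)_0=\sum_{m\ge 0}\dim\big(S^m(\mathbb{C}^3)^G\big)\,t^m=\frac{\det M_0(t)}{\det M(t)}.$$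
   Context: Let $G\subset\mathrm{SL}_3(\mathbb{C})$ be a finite group, $\gamma$ its natural 3-dimensional representation on $\mathbb{C}^3$ and $\gamma^*$ the contragredient (dual) representation. Let $\gamma_0,\gamma_1,\dots,\gamma_l$ be the irreducible complex representations of $G$ up to isomorphism, with $\gamma_0$ the trivial representation. Define the $(l+1)\times(l+1)$ integer matrices $B=(b_{ij})$ and $B^*=(b^*_{ij})$ (indices $0,\dots,l$) by $\gamma_j\otimes\gamma=\bigoplus_i b_{ij}\gamma_i$ and $\gamma_j\otimes\gamma^*=\bigoplus_i b^*_{ij}\gamma_i$. For $m\ge0$ let $\rho_m$ be the representation of $G$ on the $m$-th symmetric power $S^m(\mathbb{C}^3)$ (homogeneous polynomials of degree $m$) induced by the natural action, decompose $\rho_m=\sum_{i=0}^l v_{mi}\gamma_i$, and set $v_m=(v_{m0},\dots,v_{ml})^t\in\mathbb{Z}^{l+1}$. Put $P_G(t)=\sum_{m\ge0}v_mt^m\in\mathbb{Z}[[t]]^{l+1}$ and $P_G(t)_0=\sum_{m\ge0}v_{m0}t^m$. Let $M(t)=(1-t^3)I-tB+t^2B^*$ (a matrix with entries in $\mathbb{Z}[t]$) and let $M_0(t)$ be the matrix obtained from $M(t)$ by replacing its first column (the column indexed by $\gamma_0$) with $(1,0,\dots,0)^t$. *)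

From HB Require Import structures.
From mathcomp Require Import all_boot all_order all_algebra all_fingroup all_solvable all_field all_character.
Set Implicit Arguments. Unset Strict Implicit. Unset Printing Implicit Defensive.
Import Order.TTheory GRing.Theory Num.Theory.
Local Open Scope ring_scope.

(* Trivariate polynomials over algC, as nested univariate polynomials:
   x_1 = X1 (outermost variable), x_2 = X2, x_3 = X3. *)
Definition P3 := {poly {poly {poly algC}}}.
Definition X1 : P3 := 'X.
Definition X2 : P3 := ('X : {poly {poly algC}})%:P.
Definition X3 : P3 := (('X : {poly algC})%:P)%:P.
Definition cst3 (c : algC) : P3 := c%:P%:P%:P.
Definition var3 (j : 'I_3) : P3 := [:: X1; X2; X3]`_j.

Definition coef3 (p : P3) (e : nat * nat * nat) : algC :=
  let: (a, b, c) := e in p`_a`_b`_c.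

(* The natural (row-vector, MathComp convention) action of A : 'M_3 on
   C[x_1,x_2,x_3]: the basis vector x_i is sent to  sum_j A i j x_j, i.e.
   row i of A; this extends multiplicatively to polynomials. *)
Definition linform (A : 'M[algC]_3) (i : 'I_3) : P3 :=
  \sum_(j < 3) cst3 (A i j) * var3 j.

Definition symimg (A : 'M[algC]_3) (e : nat * nat * nat) : P3 :=
  let: (a, b, c) := e in
  linform A 0 ^+ a * linform A 1 ^+ b * linform A 2 ^+ c.

(* The monomial basis of S^m(C^3): exponent triples (a,b,c), a+b+c = m. *)
Definition mons (m : nat) : seq (nat * nat * nat) :=
  flatten [seq [seq (a, b, (m - a - b)%N) | b <- iota 0 (m.+1 - a)%N] | a <- iota 0 m.+1].
Definition dimS (m : nat) : nat := size (mons m).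

(* The matrix of rho_m(A) on S^m(C^3) in the monomial basis (row convention:
   row r = coordinates of the image of the r-th basis monomial). *)
Definition symmx (m : nat) (A : 'M[algC]_3) : 'M[algC]_(dimS m) :=
  \matrix_(r, s) coef3 (symimg A (nth (0, 0, 0)%N (mons m) r))
                       (nth (0, 0, 0)%N (mons m) s).

Section Data.
Variables (gT : finGroupType) (G : {group gT}) (rG : mx_representation algC G 3).

(* gamma = cfRepr rG, gamma^* = its complex conjugate (contragredient). *)
Definition Bmx : 'M[algC]_(Nirr G) :=
  \matrix_(i, j) '['chi[G]_j * cfRepr rG, 'chi_i].
Definition Bsmx : 'M[algC]_(Nirr G) :=
  \matrix_(i, j) '['chi[G]_j * (cfRepr rG)^*%CF, 'chi_i].

(* multiplicity v_{m i} of gamma_i in rho_m, i.e. the character inner product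
   '[chi_{rho_m}, 'chi_i]_G written out (cf. cfdotE) *)
Definition vmult (m : nat) (i : Iirr G) : algC :=
  #|G|%:R^-1 * \sum_(x in G) \tr (symmx m (rG x)) * ('chi_i x)^*.
Definition vvec (m : nat) : 'cV[algC]_(Nirr G) := \col_i vmult m i.
Definition vvecz (m : int) : 'cV[algC]_(Nirr G) :=
  if m is Posz n then vvec n else 0.

Definition Mt : 'M[{poly algC}]_(Nirr G) :=
  \matrix_(i, j) ((i == j)%:R * (1 - 'X^3) - (Bmx i j)%:P * 'X
                  + (Bsmx i j)%:P * 'X^2).
Definition M0t : 'M[{poly algC}]_(Nirr G) :=
  \matrix_(i, j) (if j == 0 then (i == 0)%:R else Mt i j).

Definition dim_inv (m : nat) : nat :=
  \rank (\bigcap_(x in G) kermx (symmx m (rG x) - 1%:M))%MS.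
End Data.

(* Formal power series over algC are sequences nat -> algC (coefficients);
   Z[[t]] = those with all coefficients in Num.int. *)
Definition pmulS (p : {poly algC}) (f : nat -> algC) (k : nat) : algC :=
  \sum_(j < k.+1) p`_j * f (k - j)%N.
Definition pmxmulS n (M : 'M[{poly algC}]_n) (f : nat -> 'cV[algC]_n) (k : nat)
  : 'cV[algC]_n :=
  \sum_(j < k.+1) map_mx (fun p : {poly algC} => p`_j) M *m f (k - j)%N.

From HB Require Import structures.
From mathcomp Require Import all_boot all_order all_algebra all_fingroup all_solvable all_field all_character.
From mathcomp Require Import zify ring.
Set Implicit Arguments. Unset Strict Implicit. Unset Printing Implicit Defensive.
Import Order.TTheory GRing.Theory Num.Theory.
Local Open Scope ring_scope.

(** The eigenvalues [d] of any [g] in [G] have product [1], so [gamma g = e1 d],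
    [gamma^* g = e2 d] (the sum of the inverse eigenvalues), and the trace of [g] on
    [S^m(C^3)] is the complete homogeneous symmetric polynomial [h_m d].  The identity
    [(1 - e1 t + e2 t^2 - e3 t^3) * sum_m h_m t^m = 1] gives the character recurrence
    [chi_(m+3) = chi_(m+2) gamma - chi_(m+1) gamma^* + chi_m]; in coordinates on the
    irreducible characters, multiplication by [gamma] and [gamma^*] acts through [B]
    and [B^*], which yields (a), and (b) is (a) read coefficientwise.  As [det M(t)]
    has integer coefficients and constant term [1], it is inverted in [Z[[t]]] by the
    geometric series in [1 - det M(t)], and Cramer's rule applied to (b) truncated at
    any order gives (c).  Finally [v_(m,0)] is the trace of the averaging projector
    onto the invariants, hence their dimension. *)

Definition mono3 (e : nat * nat * nat) : P3 :=
  let: (a, b, c) := e in X1 ^+ a * X2 ^+ b * X3 ^+ c.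

Lemma coef3_inj (p q : P3) :
  (forall a b c, coef3 p (a, b, c) = coef3 q (a, b, c)) -> p = q.
Proof. by move=> pq; apply/polyP => a; apply/polyP => b; apply/polyP => c; apply: pq. Qed.

Lemma coef3_sum I (r : seq I) (P : pred I) (F : I -> P3) e :
  coef3 (\sum_(i <- r | P i) F i) e = \sum_(i <- r | P i) coef3 (F i) e.
Proof. by case: e => [[a b] c]; rewrite /coef3 !coef_sum. Qed.

Lemma coef3CM (x : algC) (p : P3) e : coef3 (cst3 x * p) e = x * coef3 p e.
Proof. by case: e => [[a b] c]; rewrite /coef3 /cst3 !coefCM. Qed.

Lemma coef3C (x : algC) e : coef3 (cst3 x) e = x * (e == (0, 0, 0)%N)%:R.
Proof.
case: e => [[[|a] [|b]] [|c]]; rewrite /coef3 /cst3 /= ?coefC /= ?coef0 ?mulr1 ?mulr0 //.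
Qed.

Lemma coef3_mono s t : coef3 (mono3 s) t = (s == t)%:R.
Proof.
case: s t => [[a b] c] [[a' b'] c'].
rewrite /mono3 /coef3 /X1 /X2 /X3 -!rmorphXn /= -mulrA -rmorphM /= coefXnM coefC.
rewrite -[(a, b, c) == _]/((a == a') && (b == b') && (c == c')).
have [<-|neq_a] := eqVneq a a'; last first.
  by case: ltnP => ?; rewrite ?coef0 // ifN ?coef0 //; lia.
rewrite ltnn subnn /= mulrC coefCM coefXn [b' == b]eq_sym.
by case: (b == b'); rewrite ?mulr1 ?mulr0 ?coef0 // coefXn eq_sym.
Qed.

Lemma coef3M (p q : P3) a b c :
  coef3 (p * q) (a, b, c) = \sum_(i < a.+1) \sum_(j < b.+1) \sum_(k < c.+1)
     coef3 p (i : nat, j : nat, k : nat) * coef3 q ((a - i)%N, (b - j)%N, (c - k)%N).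
Proof.
rewrite /coef3 coefM !coef_sum; apply: eq_bigr => i _.
by rewrite coefM !coef_sum; apply: eq_bigr => j _; rewrite coefM.
Qed.

Definition homog3 (m : nat) (p : P3) :=
  forall a b c, (a + b + c != m)%N -> coef3 p (a, b, c) = 0.

Lemma homog3M m1 m2 p q : homog3 m1 p -> homog3 m2 q -> homog3 (m1 + m2) (p * q).
Proof.
move=> hp hq a b c abc; rewrite coef3M.
apply: big1 => i _; apply: big1 => j _; apply: big1 => k _.
have [ijk|] := eqVneq (i + j + k)%N m1; last by move/hp->; rewrite mul0r.
rewrite hq ?mulr0 //.
by have := ltn_ord i; have := ltn_ord j; have := ltn_ord k; move: abc ijk; lia.
Qed.

Lemma homog3_sum m I (r : seq I) (P : pred I) (F : I -> P3) :
  (forall i, P i -> homog3 m (F i)) -> homog3 m (\sum_(i <- r | P i) F i).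
Proof.
move=> hF a b c abc; rewrite coef3_sum big1 // => i Pi; exact: hF.
Qed.

Lemma homog3_cst x : homog3 0 (cst3 x).
Proof.
move=> a b c abc; rewrite coef3C (negbTE (_ : (a, b, c) != (0, 0, 0)%N)) ?mulr0 //.
by apply: contraNneq abc => -[-> -> ->].
Qed.

Lemma homog3_mono a b c : homog3 (a + b + c) (mono3 (a, b, c)).
Proof.
move=> a' b' c'; rewrite coef3_mono; apply: contraNeq => /eqP.
by case: eqP => // -[-> -> ->].
Qed.

Lemma homog3X m p n : homog3 m p -> homog3 (m * n) (p ^+ n).
Proof.
move=> hp; elim: n => [|n IH]; last by rewrite exprS mulnS; apply: homog3M.
by have := homog3_cst 1; rewrite expr0 muln0 /cst3 !rmorph1.
Qed.

Lemma homog3_var j : homog3 1 (var3 j).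
Proof.
case: j => [[|[|[|j]]] hj] //=; rewrite /var3 /=.
- by have := @homog3_mono 1%N 0%N 0%N; rewrite /mono3 expr1 !expr0 !mulr1.
- by have := @homog3_mono 0%N 1%N 0%N; rewrite /mono3 expr1 !expr0 mulr1 mul1r.
- by have := @homog3_mono 0%N 0%N 1%N; rewrite /mono3 expr1 !expr0 !mul1r.
Qed.

Lemma homog3_linform A i : homog3 1 (linform A i).
Proof. by apply: homog3_sum => j _; apply: (homog3M (homog3_cst _) (homog3_var _)). Qed.

Lemma homog3_symimg A a b c : homog3 (a + b + c) (symimg A (a, b, c)).
Proof.
have hX n i : homog3 n (linform A i ^+ n).
  by rewrite -{1}[n]mul1n; apply/homog3X/homog3_linform.
by apply: homog3M; first apply: homog3M.
Qed.

Lemma mem_mons a b c m : ((a, b, c) \in mons m) = (a + b + c == m)%N.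
Proof.
apply/allpairsPdep/eqP => [[x [y [+ + [-> -> ->]]]]|abc].
  by rewrite !mem_iota; lia.
by exists a, b; rewrite !mem_iota; split; [lia|lia|congr (_, _, _); lia].
Qed.

Lemma mons_uniq m : uniq (mons m).
Proof.
apply: allpairs_uniq_dep => [|x _|[x1 y1] [x2 y2] _ _ /= [-> ->]] //;
  exact: iota_uniq.
Qed.

Lemma homog3_mons m p : homog3 m p ->
  p = \sum_(s <- mons m) cst3 (coef3 p s) * mono3 s.
Proof.
move=> hp; apply: coef3_inj => a b c; rewrite coef3_sum.
under eq_bigr do rewrite coef3CM coef3_mono.
have [abc|abc] := boolP ((a, b, c) \in mons m).
  rewrite (bigD1_seq (a, b, c)) ?mons_uniq //= eqxx mulr1 big1 ?addr0 //.
  by move=> s /negbTE ->; rewrite mulr0.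
rewrite hp -?mem_mons // big1_seq // => s /andP[_ ms].
by case: eqP => [sabc|]; [move: abc; rewrite -sabc ms|rewrite mulr0].
Qed.

Definition polyC3 := @polyC {poly {poly algC}} \o @polyC {poly algC} \o @polyC algC.

Section Substitution.
Variables u1 u2 u3 : P3.

Let comm3 : commr_rmorph polyC3 u3. Proof. by move=> x; apply: mulrC. Qed.
Let eval3_3 := horner_morph comm3.
Let comm2 : commr_rmorph eval3_3 u2. Proof. by move=> x; apply: mulrC. Qed.
Let eval3_2 := horner_morph comm2.
Let comm1 : commr_rmorph eval3_2 u1. Proof. by move=> x; apply: mulrC. Qed.
Definition subst3 := horner_morph comm1.

Lemma subst3_cst x : subst3 (cst3 x) = cst3 x.
Proof.
by rewrite /subst3 /cst3 (horner_morphC comm1) /= (horner_morphC comm2) /= (horner_morphC comm3).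
Qed.

Lemma subst3_X1 : subst3 X1 = u1.
Proof. exact: (horner_morphX comm1). Qed.

Lemma subst3_X2 : subst3 X2 = u2.
Proof. by rewrite /subst3 /X2 (horner_morphC comm1) /= (horner_morphX comm2). Qed.

Lemma subst3_X3 : subst3 X3 = u3.
Proof.
by rewrite /subst3 /X3 (horner_morphC comm1) /= (horner_morphC comm2) /= (horner_morphX comm3).
Qed.
End Substitution.

Definition linsubst (A : 'M[algC]_3) : {rmorphism P3 -> P3} :=
  subst3 (linform A 0) (linform A 1) (linform A 2).

Lemma linsubst_cst A x : linsubst A (cst3 x) = cst3 x.
Proof. exact: subst3_cst. Qed.

Lemma linsubst_var A j : linsubst A (var3 j) = linform A j.
Proof.
case: j => [[|[|[|j]]] hj] //; rewrite /var3 /=.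
- by rewrite (_ : Ordinal hj = 0); [exact: subst3_X1|apply: val_inj].
- by rewrite (_ : Ordinal hj = 1); [exact: subst3_X2|apply: val_inj].
- by rewrite (_ : Ordinal hj = 2); [exact: subst3_X3|apply: val_inj].
Qed.

Lemma linsubst_linform A B i : linsubst B (linform A i) = linform (A *m B) i.
Proof.
rewrite /linform rmorph_sum.
under eq_bigr do rewrite rmorphM /= linsubst_cst linsubst_var /linform mulr_sumr.
rewrite exchange_big; apply: eq_bigr => k _.
rewrite mxE /cst3 !rmorph_sum mulr_suml; apply: eq_bigr => j _.
by rewrite !rmorphM mulrA.
Qed.

Lemma linsubst_symimg A B e : linsubst B (symimg A e) = symimg (A *m B) e.
Proof.
by case: e => [[a b] c]; rewrite /symimg !rmorphM !rmorphXn !linsubst_linform.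
Qed.

Lemma linsubst_mono B e : linsubst B (mono3 e) = symimg B e.
Proof.
case: e => [[a b] c]; rewrite /mono3 /symimg !rmorphM !rmorphXn.
by rewrite -[X1]/(var3 0) -[X2]/(var3 1) -[X3]/(var3 2) !linsubst_var.
Qed.

Lemma homog3_symimg_nth A m (r : 'I_(dimS m)) :
  homog3 m (symimg A (nth (0, 0, 0)%N (mons m) r)).
Proof.
have := mem_nth (0, 0, 0)%N (ltn_ord r).
by case: (nth _ _ _) => [[a b] c]; rewrite mem_mons => /eqP <-; apply: homog3_symimg.
Qed.

Lemma symmxM m A B : symmx m (A *m B) = symmx m A *m symmx m B.
Proof.
apply/matrixP => r s; rewrite !mxE -linsubst_symimg.
rewrite {1}(homog3_mons (homog3_symimg_nth A r)) rmorph_sum coef3_sum.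
rewrite (big_nth (0, 0, 0)%N) big_mkord; apply: eq_bigr => k _.
by rewrite rmorphM /= linsubst_cst linsubst_mono coef3CM !mxE.
Qed.

Lemma linform1 i : linform 1%:M i = var3 i.
Proof.
rewrite /linform (bigD1 i) //= big1 ?addr0 => [|j /negbTE ji].
  by rewrite mxE eqxx /cst3 !rmorph1 mul1r.
by rewrite mxE eq_sym ji /cst3 !rmorph0 mul0r.
Qed.

Lemma symmx1 m : symmx m 1%:M = 1%:M.
Proof.
apply/matrixP => r s; rewrite !mxE.
have -> : symimg 1%:M (nth (0, 0, 0)%N (mons m) r) = mono3 (nth (0, 0, 0)%N (mons m) r).
  by case: (nth _ _ _) => [[a b] c]; rewrite /symimg /mono3 !linform1.
by rewrite coef3_mono nth_uniq ?mons_uniq.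
Qed.

Definition monval (d : 'rV[algC]_3) (e : nat * nat * nat) : algC :=
  let: (a, b, c) := e in d 0 0 ^+ a * d 0 1 ^+ b * d 0 2 ^+ c.

Definition hsym3 (d : 'rV[algC]_3) (m : nat) : algC := \sum_(e <- mons m) monval d e.
Definition hsym2 (y z : algC) (n : nat) : algC := \sum_(b < n.+1) y ^+ b * z ^+ (n - b).

Definition esym1 (d : 'rV[algC]_3) := d 0 0 + d 0 1 + d 0 2.
Definition esym2 (d : 'rV[algC]_3) := d 0 0 * d 0 1 + d 0 1 * d 0 2 + d 0 0 * d 0 2.
Definition esym3 (d : 'rV[algC]_3) := d 0 0 * d 0 1 * d 0 2.

Lemma linform_diag d i : linform (diag_mx d) i = cst3 (d 0 i) * var3 i.
Proof.
rewrite /linform (bigD1 i) //= big1 ?addr0 => [|j /negbTE ji].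
  by rewrite mxE eqxx mulr1n.
by rewrite mxE eq_sym ji mulr0n /cst3 !rmorph0 mul0r.
Qed.

Lemma symimg_diag d e : symimg (diag_mx d) e = cst3 (monval d e) * mono3 e.
Proof.
case: e => [[a b] c]; rewrite /symimg /mono3 /monval !linform_diag !exprMn /cst3.
rewrite -[X1]/(var3 0) -[X2]/(var3 1) -[X3]/(var3 2) !rmorphM !rmorphXn /=; ring.
Qed.

Lemma tr_symmx_diag m d : \tr (symmx m (diag_mx d)) = hsym3 d m.
Proof.
rewrite /mxtrace /hsym3 (big_nth (0, 0, 0)%N) big_mkord; apply: eq_bigr => r _.
by rewrite mxE symimg_diag coef3CM coef3_mono eqxx mulr1.
Qed.

Lemma hsym3_split d m :
  hsym3 d m = \sum_(a < m.+1) d 0 0 ^+ a * hsym2 (d 0 1) (d 0 2) (m - a).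
Proof.
rewrite /hsym3 /mons big_allpairs_dep /=.
rewrite -(big_mkord xpredT (fun a => d 0 0 ^+ a * hsym2 (d 0 1) (d 0 2) (m - a))).
rewrite /index_iota subn0 big_seq [RHS]big_seq; apply: eq_bigr => a.
rewrite inE mem_iota => lt_a_m; rewrite /hsym2 mulr_sumr.
rewrite -(big_mkord xpredT (fun b => d 0 0 ^+ a * (d 0 1 ^+ b * d 0 2 ^+ (m - a - b)))).
rewrite /index_iota subn0.
by rewrite (_ : m.+1 - a = (m - a).+1)%N; [apply: eq_bigr => b _; rewrite mulrA|lia].
Qed.

Lemma hsym2S y z n : hsym2 y z n.+1 = z ^+ n.+1 + y * hsym2 y z n.
Proof.
rewrite /hsym2 big_ord_recl subn0 expr0 mul1r mulr_sumr; congr (_ + _).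
by apply: eq_bigr => b _; rewrite exprS mulrA subSS.
Qed.

Lemma hsym3S d m : hsym3 d m.+1 = hsym2 (d 0 1) (d 0 2) m.+1 + d 0 0 * hsym3 d m.
Proof.
rewrite !hsym3_split big_ord_recl subn0 expr0 mul1r mulr_sumr; congr (_ + _).
by apply: eq_bigr => a _; rewrite exprS mulrA subSS.
Qed.

Lemma hsym3_0 d : hsym3 d 0 = 1.
Proof. by rewrite hsym3_split big_ord1 /hsym2 big_ord1 !expr0 !mul1r. Qed.

Lemma hsym3_1 d : hsym3 d 1 = esym1 d.
Proof. by rewrite hsym3S hsym3_0 hsym2S /hsym2 big_ord1 /esym1; ring. Qed.

Lemma hsym3_2 d : hsym3 d 2 = esym1 d * hsym3 d 1 - esym2 d * hsym3 d 0.
Proof.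
by rewrite hsym3_1 hsym3_0 hsym3S hsym3_1 !hsym2S /hsym2 big_ord1 /esym1 /esym2; ring.
Qed.

Lemma hsym3_rec d n :
  hsym3 d n.+3 = esym1 d * hsym3 d n.+2 - esym2 d * hsym3 d n.+1 + esym3 d * hsym3 d n.
Proof. by rewrite !(hsym3S, hsym2S) /esym1 /esym2 /esym3 !exprS; ring. Qed.

Definition diag_similar (A : 'M[algC]_3) (d : 'rV[algC]_3) :=
  exists2 P, P \in unitmx & A = invmx P *m diag_mx d *m P.

Lemma mxtrace_conj (R : comUnitRingType) n (P M : 'M[R]_n) :
  P \in unitmx -> \tr (invmx P *m M *m P) = \tr M.
Proof. by move=> Pu; rewrite mxtrace_mulC mulmxA mulmxV // mul1mx. Qed.

Lemma sum_ord3 (V : nmodType) (F : 'I_3 -> V) : \sum_i F i = F 0 + F 1 + F 2.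
Proof. by rewrite !big_ord_recl big_ord0 addr0 addrA; congr (_ + F _ + F _); apply: val_inj. Qed.

Lemma prod_ord3 (R : pzSemiRingType) (F : 'I_3 -> R) : \prod_i F i = F 0 * F 1 * F 2.
Proof. by rewrite !big_ord_recl big_ord0 mulr1 mulrA; congr (_ * F _ * F _); apply: val_inj. Qed.

Section DiagSimilar.
Variables (A : 'M[algC]_3) (d : 'rV[algC]_3).
Hypothesis Ad : diag_similar A d.

Lemma tr_symmx_similar m : \tr (symmx m A) = hsym3 d m.
Proof.
case: Ad => P Pu ->; rewrite !symmxM mxtrace_mulC mulmxA -symmxM mulmxV //.
by rewrite symmx1 mul1mx tr_symmx_diag.
Qed.

Lemma tr_similar : \tr A = esym1 d.
Proof. by case: Ad => P Pu ->; rewrite mxtrace_conj // mxtrace_diag sum_ord3. Qed.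

Lemma det_similar : \det A = esym3 d.
Proof.
case: Ad => P Pu ->; rewrite !det_mulmx det_inv mulrAC mulVf -?unitfE -?unitmxE //.
by rewrite mul1r det_diag prod_ord3.
Qed.

Lemma tr_inv_similar : esym3 d = 1 -> \tr (invmx A) = esym2 d.
Proof.
move=> d3; have dP : \prod_i d 0 i != 0 by rewrite prod_ord3 -/(esym3 d) d3 oner_neq0.
have dn0 j : d 0 j != 0 by apply: contraNneq dP => dj; rewrite (bigD1 j) //= dj mul0r.
have [P Pu defA] := Ad; set D' := diag_mx (\row_j (d 0 j)^-1).
have AD' : A *m (invmx P *m D' *m P) = 1%:M.
  rewrite defA !mulmxA mulmxK // -[_ *m D']mulmxA mulmx_diag.
  rewrite (_ : \row_j _ = const_mx 1) ?diag_const_mx ?mulmx1 ?mulVmx //.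
  by apply/rowP => j; rewrite !mxE mulfV.
have Au : A \in unitmx by rewrite unitmxE det_similar d3 unitr1.
rewrite -[invmx A]mulmx1 -AD' mulKmx // mxtrace_conj // mxtrace_diag sum_ord3 !mxE.
rewrite -[LHS]mulr1 -d3 /esym3 /esym2; field.
by rewrite !dn0.
Qed.
End DiagSimilar.

Lemma finite_order_similar (A : 'M[algC]_3) n :
  (0 < n)%N -> A ^+ n = 1 -> exists d, diag_similar A d.
Proof.
move=> n_gt0 An1; have [z prim_z] := C_prim_root_exists n_gt0.
have : diagonalizable A.
  apply/diagonalizableP; exists [seq z ^+ i | i <- index_iota 0 n].
    rewrite map_inj_in_uniq ?iota_uniq // => i j.
    rewrite !mem_index_iota => ltin ltjn /eqP.
    by rewrite (eq_prim_root_expr prim_z) !modn_small // => /eqP.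
  rewrite big_map factor_Xn_sub_1 //; apply: mxminpoly_min.
  by rewrite rmorphB rmorphXn /= horner_mx_X rmorph1 An1 subrr.
case=> P Pu /(diagonalizable_forLR Pu) [d defA].
by exists d, P; rewrite // -mxpoly.conjVmx.
Qed.

Section SymmetricPowers.
Variables (gT : finGroupType) (G : {group gT}) (rG : mx_representation algC G 3).
Hypothesis detG : forall x, x \in G -> \det (rG x) = 1.
Local Notation gam := (cfRepr rG).

Fact sym_repr_proof m : mx_repr G (fun x => symmx m (rG x)).
Proof.
split=> [|x y Gx Gy]; first by rewrite repr_mx1 symmx1.
by rewrite repr_mxM // symmxM.
Qed.
Definition sym_repr m := MxRepresentation (sym_repr_proof m).
Definition sym_char m := cfRepr (sym_repr m).

Lemma sym_charE m x : x \in G -> sym_char m x = \tr (symmx m (rG x)).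
Proof. by move=> Gx; rewrite cfunE Gx mulr1n. Qed.

Lemma vmult_cfdot m i : vmult rG m i = '[sym_char m, 'chi_i].
Proof. by rewrite cfdotE /vmult; congr (_ * _); apply: eq_bigr => x /sym_charE->. Qed.

Lemma cfRepr_conjC x : x \in G -> gam^*%CF x = \tr (invmx (rG x)).
Proof.
move=> Gx; rewrite cfConjCE -char_inv ?cfRepr_char //.
by rewrite cfunE groupV Gx mulr1n repr_mxV.
Qed.

Lemma sym_char_eigen x : x \in G -> exists d : 'rV[algC]_3,
  [/\ forall m, sym_char m x = hsym3 d m, gam x = esym1 d,
      gam^*%CF x = esym2 d & esym3 d = 1].
Proof.
move=> Gx; have rGx1 : rG x ^+ #|G| = 1 by rewrite -repr_mxX // expg_cardG // repr_mx1.
have [d Ad] := finite_order_similar (cardG_gt0 G) rGx1.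
have d3 : esym3 d = 1 by rewrite -(det_similar Ad) detG.
exists d; split=> // [m||].
- by rewrite sym_charE // (tr_symmx_similar Ad).
- by rewrite cfunE Gx mulr1n (tr_similar Ad).
- by rewrite cfRepr_conjC // (tr_inv_similar Ad).
Qed.

Lemma sym_char0 : sym_char 0 = 1.
Proof.
apply/cfun_inP => x Gx; rewrite cfun1E Gx.
by have [d [-> _ _ _]] := sym_char_eigen Gx; rewrite hsym3_0.
Qed.

Lemma sym_char1 : sym_char 1 = gam.
Proof.
apply/cfun_inP => x Gx.
by have [d [-> -> _ _]] := sym_char_eigen Gx; rewrite hsym3_1.
Qed.

Lemma sym_char2 : sym_char 2 = sym_char 1 * gam - sym_char 0 * gam^*%CF.
Proof.
apply/cfun_inP => x Gx; have [d [s g gs _]] := sym_char_eigen Gx.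
by rewrite s hsym3_2 -!s -g -gs !cfunE; ring.
Qed.

Lemma sym_char_rec n :
  sym_char n.+3 = sym_char n.+2 * gam - sym_char n.+1 * gam^*%CF + sym_char n.
Proof.
apply/cfun_inP => x Gx; have [d [s g gs d3]] := sym_char_eigen Gx.
by rewrite s hsym3_rec d3 -!s -g -gs !cfunE; ring.
Qed.
End SymmetricPowers.

Section IrrCoordinates.
Variables (gT : finGroupType) (G : {group gT}).

Definition irr_coords (phi : 'CF(G)) : 'cV[algC]_(Nirr G) := \col_i '[phi, 'chi_i].

Definition mul_coords_mx (psi : 'CF(G)) : 'M[algC]_(Nirr G) :=
  \matrix_(i, j) '['chi[G]_j * psi, 'chi_i].

Lemma irr_coordsD phi psi : irr_coords (phi + psi) = irr_coords phi + irr_coords psi.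
Proof. by apply/colP => i; rewrite !mxE cfdotDl. Qed.

Lemma irr_coordsB phi psi : irr_coords (phi - psi) = irr_coords phi - irr_coords psi.
Proof. by apply/colP => i; rewrite !mxE cfdotBl. Qed.

Lemma mul_coords_mxE psi phi :
  mul_coords_mx psi *m irr_coords phi = irr_coords (phi * psi).
Proof.
apply/colP => i; rewrite !mxE {2}(cfun_sum_cfdot phi) mulr_suml cfdot_suml.
by apply: eq_bigr => j _; rewrite !mxE -scalerAl cfdotZl mulrC.
Qed.
End IrrCoordinates.

Section Recurrence.
Variables (gT : finGroupType) (G : {group gT}) (rG : mx_representation algC G 3).
Hypothesis detG : forall x, x \in G -> \det (rG x) = 1.

Lemma vvec_coords m : vvec rG m = irr_coords (sym_char rG m).
Proof. by apply/colP => i; rewrite !mxE vmult_cfdot. Qed.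

Lemma Bmx_vvec m : Bmx rG *m vvec rG m = irr_coords (sym_char rG m * cfRepr rG).
Proof. by rewrite vvec_coords mul_coords_mxE. Qed.

Lemma Bsmx_vvec m :
  Bsmx rG *m vvec rG m = irr_coords (sym_char rG m * (cfRepr rG)^*%CF).
Proof. by rewrite vvec_coords mul_coords_mxE. Qed.

Lemma vvec0 : vvec rG 0 = \col_(i < Nirr G) (i == 0)%:R.
Proof.
by apply/colP => i; rewrite vvec_coords (sym_char0 detG) !mxE -irr0 cfdot_irr eq_sym.
Qed.

Lemma vvec1 : vvec rG 1 = Bmx rG *m vvec rG 0.
Proof. by rewrite Bmx_vvec vvec_coords (sym_char0 detG) (sym_char1 detG) mul1r. Qed.

Lemma vvec2 : vvec rG 2 = Bmx rG *m vvec rG 1 - Bsmx rG *m vvec rG 0.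
Proof. by rewrite Bmx_vvec Bsmx_vvec vvec_coords (sym_char2 detG) irr_coordsB. Qed.

Lemma vvec_rec n :
  vvec rG n.+3 = Bmx rG *m vvec rG n.+2 - Bsmx rG *m vvec rG n.+1 + vvec rG n.
Proof.
rewrite Bmx_vvec Bsmx_vvec [vvec rG n]vvec_coords vvec_coords (sym_char_rec detG).
by rewrite irr_coordsD irr_coordsB.
Qed.

Lemma vvecz_rec (m : int) : -1 <= m ->
  vvecz rG (m + 2) = Bmx rG *m vvecz rG (m + 1) - Bsmx rG *m vvecz rG m + vvecz rG (m - 1).
Proof.
case: m => [[|n]|[|n]] // _; rewrite /vvecz /=.
- by rewrite addr0 vvec2.
- by rewrite subn1 /= !addn1 addn2 vvec_rec.
- by rewrite mulmx0 subr0 addr0 vvec1.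
Qed.

Lemma coef_Mt j : map_mx (coefp j) (Mt rG) =
  (j == 0%N)%:R *: 1%:M - (j == 1%N)%:R *: Bmx rG + (j == 2%N)%:R *: Bsmx rG
  - (j == 3%N)%:R *: 1%:M.
Proof.
apply/matrixP => i k; rewrite !mxE /=.
by rewrite coefD coefB -polyC_natr !coefCM coefB coef1 coefX !coefXn; ring.
Qed.

Lemma sum_delta_vvec k c :
  \sum_(j < k.+1) (j == c :> nat)%:R *: vvec rG (k - j) = vvecz rG (k%:Z - c%:Z).
Proof.
have [le_ck|lt_kc] := leqP c k.
  rewrite (bigD1 (Ordinal (le_ck : c < k.+1)%N)) //= eqxx scale1r big1 ?addr0 ?subzn //.
  by move=> j; rewrite -val_eqE /=; case: eqP => // _ _; apply: scale0r.
rewrite big1 => [|j _]; last by rewrite ltn_eqF ?scale0r // (leq_trans (ltn_ord j)).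
by rewrite -opprB subzn 1?ltnW // -(subnSK lt_kc) -NegzE.
Qed.

Lemma pmxmulS_Mt_vvecE k : pmxmulS (Mt rG) (vvec rG) k =
  vvecz rG k - (Bmx rG *m vvecz rG (k%:Z - 1) - Bsmx rG *m vvecz rG (k%:Z - 2)
                + vvecz rG (k%:Z - 3)).
Proof.
rewrite /pmxmulS.
under eq_bigr do rewrite coef_Mt !mulmxDl !mulNmx -!scalemxAl !mul1mx !scalemxAr.
rewrite !big_split /= !sumrN -!mulmx_sumr !sum_delta_vvec subr0.
by rewrite opprD opprB !addrA; congr (_ - _); rewrite addrAC.
Qed.

Lemma pmxmulS_Mt_vvec k :
  pmxmulS (Mt rG) (vvec rG) k = if k == 0%N then vvec rG 0 else 0.
Proof.
rewrite pmxmulS_Mt_vvecE; case: k => [|k]; first by rewrite /= !mulmx0 !subrr !addr0 subr0.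
have := @vvecz_rec (k.+1%:Z - 2); rewrite subrK.
have -> : k.+1%:Z - 2 + 1 = k.+1%:Z - 1 by lia.
have -> : k.+1%:Z - 2 - 1 = k.+1%:Z - 3 by lia.
by move=> -> //; [exact: subrr | lia].
Qed.
End Recurrence.

Section Integrality.
Variables (gT : finGroupType) (G : {group gT}) (rG : mx_representation algC G 3).

Lemma Bmx_int i j : Bmx rG i j \in Num.int.
Proof. by rewrite mxE intr_nat // Cnat_cfdot_char ?rpredM ?irr_char ?cfRepr_char. Qed.

Lemma Bsmx_int i j : Bsmx rG i j \in Num.int.
Proof.
by rewrite mxE intr_nat // Cnat_cfdot_char ?rpredM ?irr_char ?cfConjC_char ?cfRepr_char.
Qed.

Lemma det_Mt_int : \det (Mt rG) \is a polyOver Num.int_num_subdef.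
Proof.
apply: rpred_sum => s _; rewrite rpredM ?rpredX ?rpredN ?rpred1 //.
apply: rpred_prod => i _; rewrite mxE.
by rewrite !(rpredB, rpredD, rpredM) ?polyOverX ?polyOverXn ?rpred1 ?rpred_nat //
  polyOverC ?Bmx_int ?Bsmx_int.
Qed.

Lemma det_Mt_coef0 : (\det (Mt rG))`_0 = 1.
Proof.
rewrite -horner_coef0 -[_.[0]]/(horner_eval 0 _) -det_map_mx.
suff -> : map_mx (horner_eval 0) (Mt rG) = 1%:M by rewrite det1.
have := coef_Mt rG 0; rewrite /= scale1r !scale0r !subr0 addr0 => <-.
by apply/matrixP => i j; rewrite !mxE /horner_eval horner_coef0.
Qed.
End Integrality.

Section SeriesInverse.
Variable d : {poly algC}.
Hypothesis d0 : d`_0 = 1.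

Definition geom_inv (N : nat) := \sum_(i < N.+1) (1 - d) ^+ i.
Definition series_inv (k : nat) := (geom_inv k)`_k.

Lemma coef_1B_expr_small i l : (l < i)%N -> ((1 - d) ^+ i)`_l = 0.
Proof.
elim: i l => [//|i IH] l lt_li; rewrite exprS coefM; apply: big1 => -[[|j] lt_jl] _ /=.
  by rewrite coefB coef1 d0 subrr mul0r.
by rewrite IH ?mulr0 //; lia.
Qed.

Lemma coef_geom_inv N l : (l <= N)%N -> (geom_inv N)`_l = series_inv l.
Proof.
move/subnKC <-; elim: (N - l)%N => [|k IH]; first by rewrite addn0.
rewrite addnS /geom_inv big_ord_recr -/(geom_inv _) coefD IH.
by rewrite coef_1B_expr_small ?addr0 //= ltnS leq_addr.
Qed.

Lemma mul_geom_inv N : d * geom_inv N = 1 - (1 - d) ^+ N.+1.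
Proof.
elim: N => [|N IH]; first by rewrite /geom_inv big_ord1 expr0 mulr1 expr1; ring.
by rewrite /geom_inv big_ord_recr mulrDr -/(geom_inv N) IH [(1 - d) ^+ N.+2]exprS; ring.
Qed.

Lemma pmulS_series_inv p N k : (k <= N)%N -> pmulS p series_inv k = (p * geom_inv N)`_k.
Proof.
by move=> le_kN; rewrite coefM; apply: eq_bigr => j _; rewrite coef_geom_inv //; lia.
Qed.

Lemma series_invK k : pmulS d series_inv k = (k == 0%N)%:R.
Proof.
by rewrite (pmulS_series_inv d (leqnn k)) mul_geom_inv coefB coef1 coef_1B_expr_small ?subr0.
Qed.

Lemma series_inv_int k : d \is a polyOver Num.int_num_subdef -> series_inv k \in Num.int.
Proof.
move=> dZ; have /polyOverP geomZ : geom_inv k \is a polyOver Num.int_num_subdef.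
  by apply: rpred_sum => i _; rewrite rpredX // rpredB // rpred1.
exact: geomZ.
Qed.
End SeriesInverse.

Lemma coefMl_eq_upto (R : nzRingType) N (c a b : {poly R}) :
  (forall k, (k <= N)%N -> a`_k = b`_k) -> forall k, (k <= N)%N -> (c * a)`_k = (c * b)`_k.
Proof.
by move=> ab k le_kN; rewrite !coefM; apply: eq_bigr => j _; rewrite ab //; lia.
Qed.

Section Cramer.
Variables (gT : finGroupType) (G : {group gT}) (rG : mx_representation algC G 3).
Hypothesis detG : forall x, x \in G -> \det (rG x) = 1.

Definition vvec_poly N : 'cV[{poly algC}]_(Nirr G) := \col_i \poly_(k < N.+1) vmult rG k i.

Lemma coef_Mt_vvec_poly N i k : (k <= N)%N ->
  ((Mt rG *m vvec_poly N) i 0)`_k = ((k == 0%N) && (i == 0))%:R.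
Proof.
move=> le_kN; transitivity (pmxmulS (Mt rG) (vvec rG) k i 0).
  rewrite /pmxmulS summxE mxE coef_sum; under eq_bigr do rewrite mxE coefM.
  rewrite exchange_big; apply: eq_bigr => j _; rewrite mxE; apply: eq_bigr => l _.
  by rewrite !mxE coef_poly ltnS (leq_trans (leq_subr _ _) le_kN).
by rewrite (pmxmulS_Mt_vvec detG); case: eqP; rewrite ?(vvec0 detG) mxE.
Qed.

Lemma det_M0t : \det (M0t rG) = cofactor (Mt rG) 0 0.
Proof.
rewrite (expand_det_col _ 0) (bigD1 0) //= big1 ?addr0 => [|i /negbTE i0]; last first.
  by rewrite mxE eqxx i0 mul0r.
rewrite mxE /= mul1r /cofactor; congr (_ * \det _); apply/matrixP => i j.
by rewrite !mxE eq_sym (negbTE (neq_lift _ _)).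
Qed.

(** Cramer's rule, truncated at order [N]. *)
Lemma coef_det_Mt_vvec_poly N k : (k <= N)%N ->
  (\det (Mt rG) * vvec_poly N 0 0)`_k = (\det (M0t rG))`_k.
Proof.
move=> le_kN.
have MP i l : (l <= N)%N -> ((Mt rG *m vvec_poly N) i 0)`_l = ((i == 0)%:R%:P)`_l.
  by move=> le_lN; rewrite coef_Mt_vvec_poly // coefC; case: (l == 0%N).
have adjP : (\det (Mt rG))%:M *m vvec_poly N = \adj (Mt rG) *m (Mt rG *m vvec_poly N).
  by rewrite mulmxA mul_adj_mx.
have := congr1 (fun v : 'cV[{poly algC}]_(Nirr G) => (v 0 0)`_k) adjP.
rewrite mul_scalar_mx mxE /= => ->.
rewrite mxE coef_sum (bigD1 0) //= big1 ?addr0 => [|i /negbTE i0].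
  by rewrite (coefMl_eq_upto _ (MP 0)) // eqxx mulr1 det_M0t mxE.
by rewrite (coefMl_eq_upto _ (MP i)) // i0 mulr0 coef0.
Qed.

Lemma vmult0_series m :
  vmult rG m 0 = pmulS (\det (M0t rG)) (series_inv (\det (Mt rG))) m.
Proof.
have d0 := det_Mt_coef0 rG.
rewrite (pmulS_series_inv d0 _ (leqnn m)) mulrC.
rewrite -(coefMl_eq_upto _ (@coef_det_Mt_vvec_poly m) (leqnn m)) mulrA.
rewrite [_ * \det _]mulrC mul_geom_inv //.
have trunc l : (l <= m)%N -> (1 - (1 - \det (Mt rG)) ^+ m.+1)`_l = (1 : {poly algC})`_l.
  by move=> le_lm; rewrite coefB coef_1B_expr_small ?subr0.
by rewrite mulrC (coefMl_eq_upto _ trunc) // mulr1 mxE coef_poly ltnSn.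
Qed.
End Cramer.

Lemma mxtrace_idem (F : fieldType) n (E : 'M[F]_n) : E *m E = E -> \tr E = (\rank E)%:R.
Proof.
move=> EE; set B := row_base E.
have [sEB sBE] : (E <= B)%MS /\ (B <= E)%MS by rewrite !(eq_row_base E).
have EC : E = (E *m pinvmx B) *m B by rewrite mulmxKpV.
have BE : B *m E = B by case/submxP: sBE => D DE; rewrite {1}DE -mulmxA EE -DE.
have BC : B *m (E *m pinvmx B) = 1%:M.
  apply: (row_free_inj (row_base_free E)); rewrite /= mul1mx -mulmxA -EC.
  exact: BE.
by rewrite {1}EC mxtrace_mulC BC mxtrace1.
Qed.

Section FixedPoints.
Variables (gT : finGroupType) (G : {group gT}) (n : nat).
Variable rH : mx_representation algC G n.

Let avg := #|G|%:R^-1 *: \sum_(x in G) rH x.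

Let avg_fixed m (M : 'M[algC]_(m, n)) : (M <= rfix_mx rH G)%MS -> M *m avg = M.
Proof.
move/rfix_mxP => fixM; rewrite /avg -scalemxAr mulmx_sumr (eq_bigr (fun _ => M)) //.
by rewrite sumr_const -scaler_nat scalerA mulVf ?neq0CG // scale1r.
Qed.

Let avg_rfix : (avg <= rfix_mx rH G)%MS.
Proof.
apply/rfix_mxP => y Gy; rewrite /avg -scalemxAl mulmx_suml; congr (_ *: _).
rewrite (eq_bigr (fun x => rH (x * y)%g)) => [|x Gx]; last by rewrite repr_mxM.
by rewrite [RHS](reindex_inj (mulIg y)) /=; apply: eq_bigl => x; rewrite groupMr.
Qed.

Lemma rank_rfix_mx : (\rank (rfix_mx rH G))%:R = #|G|%:R^-1 * \sum_(x in G) \tr (rH x).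
Proof.
have sFavg : (rfix_mx rH G <= avg)%MS by rewrite -[X in (X <= _)%MS]avg_fixed ?submxMl.
rewrite (eqmx_rank (_ : (rfix_mx rH G == avg)%MS)) ?sFavg ?avg_rfix //.
by rewrite -mxtrace_idem ?avg_fixed // /avg mxtraceZ raddf_sum.
Qed.
End FixedPoints.

Lemma dim_inv_rfix (gT : finGroupType) (G : {group gT}) (rG : mx_representation algC G 3) m :
  dim_inv rG m = \rank (rfix_mx (sym_repr rG m) G).
Proof.
apply/eqmx_rank/andP; split.
  apply/rfix_mxP => x Gx; apply/eqP; rewrite -subr_eq0 -[X in _ - X]mulmx1 -mulmxBr.
  by apply/eqP/sub_kermxP/(bigcapmx_inf x).
apply/sub_bigcapmxP => x Gx; apply/sub_kermxP.
by rewrite mulmxBr mulmx1 (rfix_mx_id (sym_repr rG m)) ?subrr.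
Qed.

Lemma vmult0_dim_inv (gT : finGroupType) (G : {group gT}) (rG : mx_representation algC G 3) m :
  vmult rG m 0 = (dim_inv rG m)%:R.
Proof.
rewrite dim_inv_rfix rank_rfix_mx /vmult; congr (_ * _); apply: eq_bigr => x Gx.
by rewrite irr0 cfun1E Gx conjC1 mulr1.
Qed.

Unset Implicit Arguments.
Theorem theorem2 (gT : finGroupType) (G : {group gT})
    (rG : mx_representation algC G 3)
    (faithful : mx_faithful rG)
    (detG : forall x, x \in G -> \det (rG x) = 1) :
  (* (a) *)
  (forall m : int, (-1 <= m)%R ->
     vvecz rG (m + 2) =
       Bmx rG *m vvecz rG (m + 1) - Bsmx rG *m vvecz rG m + vvecz rG (m - 1))
  /\
  (* (b) *)
  (vvec rG 0 = \col_(i < Nirr G) (i == 0)%:R /\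
   forall k : nat,
     pmxmulS (Mt rG) (vvec rG) k = (if k == 0%N then vvec rG 0 else 0))
  /\
  (* (c) *)
  ((forall k, (\det (Mt rG))`_k \in Num.int) /\
   exists q : nat -> algC,
     (forall k, q k \in Num.int) /\
     (forall k, pmulS (\det (Mt rG)) q k = (k == 0%N)%:R) /\
     (forall m, vmult rG m 0 = (dim_inv rG m)%:R) /\
     (forall m, vmult rG m 0 = pmulS (\det (M0t rG)) q m)).
Proof.
have detZ := det_Mt_int rG.
split; first exact: vvecz_rec.
split; first by split; [exact: vvec0 | exact: pmxmulS_Mt_vvec].
split; first by move=> k; apply/polyOverP.
exists (series_inv (\det (Mt rG))); split; first by move=> k; exact: series_inv_int.
split; first exact/series_invK/det_Mt_coef0.
by split=> m; [exact: vmult0_dim_inv | exact: vmult0_series].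
Qed.
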